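(* Let $(a,b,c)\in\mathbb{Z}^3$ be a primitive triple with $a^2+b^3=c^{10}$, and suppose that $f(x)=x^3+3bx-2a$ is irreducible over $\mathbb{Q}$. Then the splitting field of $f$ over $\mathbb{Q}$ is isomorphic to the splitting field of $x^3-6x-6$ over $\mathbb{Q}$; equivalently $\mathbb{Q}(E_{(a,b,c)}[2])\cong\mathbb{Q}(E_{(3,-2,1)}[2])$.
   Context: A triple $(a,b,c)$ is primitive if $\gcd(a,b,c)=1$. $E_{(a,b,c)}$ denotes the curve $Y^2=X^3+3bX-2a$, and $\mathbb{Q}(E[2])$ denotes the field generated by the coordinates of the $2$-torsion points, i.e. the splitting field of the cubic. *)

From HB Require Import structures.
From mathcomp Require Import all_boot all_order all_algebra all_field.
Set Implicit Arguments. Unset Strict Implicit. Unset Printing Implicit Defensive.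
Import GRing.Theory Num.Theory.
Local Open Scope ring_scope.

Definition fcubic (a b : int) : {poly rat} :=
  'X^3 + ((3 * b)%:~R)%:P * 'X - ((2 * a)%:~R)%:P.

(* L is a splitting field of p over Q: L is generated over Q (= 1%VS)
   by the roots of p, and p splits into linear factors in L. *)
Definition is_splitting_field_Q (L : fieldExtType rat) (p : {poly rat}) : Prop :=
  splittingFieldFor 1%VS (map_poly (in_alg L) p) fullv.

Definition field_iso (L1 L2 : fieldExtType rat) : Prop :=
  exists g : {rmorphism L1 -> L2}, bijective g.

From HB Require Import structures.
From mathcomp Require Import all_boot all_order all_algebra all_field.
From mathcomp Require Import ring zify.
Import GRing.Theory Num.Theory.
Set Implicit Arguments. Unset Strict Implicit. Unset Printing Implicit Defensive.

(* The discriminant of [f] is [-108 c^10 = -3 (6 c^5)^2], so a primitive cube root of unity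
   [w] lies in the splitting field [K]. The cubes of the Lagrange resolvents of the roots are
   [27 (a + c^5)] and [27 (a - c^5)], whose product is [-729 b^3]; by primitivity the factors
   [a +- c^5] share no odd prime, so each is a cube times a power of [4], and it is not a cube
   itself since Cardano's formula would then give a rational root of [f]. Hence [K] contains a
   cube root [s] of [2], and [K = Q(w, s) = Q(x)] with [x = s (1 + 2 w)], [x^6 = -108].
   The case [(a, b, c) = (3, -2, 1)] gives the same description for [x^3 - 6 x - 6]; two fields
   generated by a root of [X^6 + 108] that split it map into each other, hence are isomorphic. *)

Lemma cube_of_logn (X : nat) :
  0 < X -> (forall p, prime p -> 3 %| logn p X) -> exists T, X = T ^ 3.
Proof.
move=> X_gt0 dvd3; exists (\prod_(p <- primes X) p ^ (logn p X %/ 3)).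
rewrite (big_morph (expn^~ 3) (fun x y => expnMn x y 3) (exp1n 3)).
rewrite {1}(prod_prime_decomp X_gt0) prime_decompE big_map /=.
apply: eq_big_seq => p; rewrite mem_primes => /and3P[p_pr _ _].
by rewrite -expnM divnK // dvd3.
Qed.

(* Odd primes occur in [M] to multiples of 3; the [2]-adic valuation [v] is repaired by
   [k = v mod 3], as [v + 2 v = 3 v]. *)
Lemma odd_coprime_mul_cube (M N B : nat) :
  M * N = B ^ 3 -> 0 < M ->
  (forall p, prime p -> odd p -> p %| M -> p %| N -> False) ->
  exists2 k, k < 3 & exists T, M * 4 ^ k = T ^ 3.
Proof.
move=> MN_cube M_gt0 no_common.
pose k := logn 2 M %% 3.
exists k; first by rewrite ltn_pmod.
apply: cube_of_logn => [|p p_pr]; first by rewrite muln_gt0 M_gt0 expn_gt0.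
rewrite lognM ?expn_gt0 // lognX.
have [->|p_odd] := even_prime p_pr.
  have -> : logn 2 4 = 2 by rewrite (lognX 2 2 2) logn_prime.
  rewrite /k; lia.
have -> : logn p 4 = 0.
  apply: logn_coprime; rewrite prime_coprime // (_ : 4 = 2 ^ 2) //.
  rewrite Euclid_dvdX // andbT dvdn_prime2 //.
  by apply/eqP => p2; rewrite p2 in p_odd.
rewrite muln0 addn0.
have [pM|pNM] := boolP (p %| M); last by rewrite logn_coprime ?prime_coprime.
have pNN : ~~ (p %| N) by apply/negP => pN; exact: no_common p p_pr p_odd pM pN.
have N_gt0 : 0 < N by rewrite lt0n; apply: contraNneq pNN => ->; rewrite dvdn0.
have B_gt0 : 0 < B by rewrite -(ltn_exp2r _ _ (isT : 0 < 3)) -MN_cube muln_gt0 M_gt0.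
have := congr1 (logn p) MN_cube.
rewrite lognM // lognX (@logn_coprime p N) ?prime_coprime // addn0 => ->.
exact: dvdn_mulr.
Qed.

Local Open Scope ring_scope.

Lemma odd_coprimez_mul_cube (m n b : int) :
  m * n = - b ^+ 3 -> m != 0 ->
  (forall p : nat, prime p -> odd p -> (p%:Z %| m)%Z -> (p%:Z %| n)%Z -> False) ->
  exists2 k : nat, (k < 3)%N & exists T : int, m * 4 ^+ k = T ^+ 3.
Proof.
move=> mn_cube m_neq0 no_common.
have MN_cube : (`|m| * `|n| = `|b| ^ 3)%N.
  by have := congr1 absz mn_cube; rewrite abszM abszN abszX.
have m_gt0 : (0 < `|m|)%N by rewrite absz_gt0.
have no_common_abs p : prime p -> odd p -> (p %| `|m|)%N -> (p %| `|n|)%N -> False.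
  by move=> p_pr p_odd pm pn; apply: (no_common p); rewrite ?dvdzE.
have [k k_lt3 [T MT_cube]] := odd_coprime_mul_cube MN_cube m_gt0 no_common_abs.
exists k => //; exists ((-1) ^+ (m < 0)%R * T%:Z).
rewrite {1}(intEsign m) -mulrA exprMn -signr_odd.
congr (_ * _); first by case: (m < 0)%R.
by have := congr1 Posz MT_cube; rewrite PoszM -!natz !natrX.
Qed.

(* [m] lies in one of the two nontrivial classes 2 Q^x3, 4 Q^x3 of Q^x / Q^x3. *)
Definition cube_class2 (m : int) : Prop :=
  exists2 k : nat, (0 < k < 3)%N & exists T : int, m * 4 ^+ k = T ^+ 3.

Lemma fcubic_rootE (a b : int) (q : rat) :
  root (fcubic a b) q = (q ^+ 3 + 3 * b%:~R * q - 2 * a%:~R == 0).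
Proof. by rewrite /root /fcubic !hornerE !intrM. Qed.

Lemma fcubic_root_c0 (a b : int) :
  a ^+ 2 + b ^+ 3 = 0 -> exists q : rat, root (fcubic a b) q.
Proof.
move=> /(congr1 (fun z : int => z%:~R : rat)); rewrite /= intrD !rmorphXn rmorph0 /=.
set A : rat := a%:~R; set B : rat := b%:~R => AB0.
have [B0 | B_neq0] := eqVneq B 0.
  exists 0; rewrite fcubic_rootE -/A -/B.
  have A0 : A = 0 by apply/eqP; rewrite -sqrf_eq0 -AB0 B0 expr0n addr0.
  by rewrite A0; apply/eqP; ring.
exists (A / B); rewrite fcubic_rootE -/A -/B; apply/eqP.
have -> : (A / B) ^+ 3 + 3 * B * (A / B) - 2 * A = A * (A ^+ 2 + B ^+ 3) / B ^+ 3.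
  by field.
by rewrite AB0 mulr0 mul0r.
Qed.

(* Cardano's formula: [t^3 + (-b/t)^3 = m + n = 2 a] and [t (-b/t) = -b]. *)
Lemma fcubic_root_of_cube (a b m n T : int) :
  m * n = - b ^+ 3 -> m + n = 2 * a -> m = T ^+ 3 -> T != 0 ->
  root (fcubic a b) (T%:~R - b%:~R / T%:~R).
Proof.
move=> mn_cube mn_sum m_cube T_neq0.
have TR_neq0 : (T%:~R : rat) != 0 by rewrite intr_eq0.
have mR : (m%:~R : rat) = T%:~R ^+ 3 by rewrite m_cube rmorphXn.
have mnR : (m%:~R : rat) * n%:~R = - b%:~R ^+ 3 by rewrite -intrM mn_cube intrN rmorphXn.
have sum_cubes : 2 * (a%:~R : rat) = T%:~R ^+ 3 - b%:~R ^+ 3 / T%:~R ^+ 3.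
  have nE : (n%:~R : rat) = - b%:~R ^+ 3 / T%:~R ^+ 3 by rewrite -mnR mR; field.
  by rewrite -[2]/(2%:~R) -intrM -mn_sum intrD nE mR mulNr.
by rewrite fcubic_rootE sum_cubes; apply/eqP; field.
Qed.

Lemma size_linear_poly (R : nzRingType) (c d : R) : (size (c%:P * 'X - d%:P)%R <= 2)%N.
Proof.
rewrite (leq_trans (size_polyD _ _)) // geq_max size_polyN mul_polyC.
by rewrite (leq_trans (size_scale_leq _ _)) ?size_polyX // (leq_trans (size_polyC_leq1 _)).
Qed.

Lemma size_cubic (R : nzRingType) (c d : R) : size ('X^3 + c%:P * 'X - d%:P) = 4%N.
Proof.
by rewrite -addrA size_polyDl size_polyXn // (leq_ltn_trans (size_linear_poly c d)).
Qed.

Lemma monic_cubic (R : nzRingType) (c d : R) : 'X^3 + c%:P * 'X - d%:P \is monic.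
Proof.
rewrite monicE -addrA lead_coefDl ?lead_coefXn // size_polyXn.
exact: leq_ltn_trans (size_linear_poly c d) _.
Qed.

Lemma irreducible_fcubic_noroot (a b : int) (q : rat) :
  irreducible_poly (fcubic a b) -> ~~ root (fcubic a b) q.
Proof.
move=> f_irr; apply/negP => f_q.
have /irredp_XsubCP : 'X - q%:P %| fcubic a b by rewrite dvdp_XsubCl.
case/(_ f_irr) => /eqp_size; rewrite size_XsubC ?size_poly1 //.
by rewrite /fcubic size_cubic.
Qed.

Lemma irreducible_fcubic_c_neq0 (a b c : int) :
  a ^+ 2 + b ^+ 3 = c ^+ 10 -> irreducible_poly (fcubic a b) -> c != 0.
Proof.
move=> abc f_irr; apply/eqP => c0; move: abc; rewrite c0 expr0n /= => /fcubic_root_c0[q].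
exact/negP/irreducible_fcubic_noroot.
Qed.

Lemma odd_prime_dvdz_double (p : nat) (x : int) :
  prime p -> odd p -> (p%:Z %| 2 * x)%Z -> (p%:Z %| x)%Z.
Proof.
move=> p_pr p_odd; rewrite Gauss_dvdzr // /coprimez /gcdz /=.
by change (coprime p 2); rewrite coprimen2.
Qed.

Lemma prime_dvdzX (p : nat) (x : int) (n : nat) :
  prime p -> (p%:Z %| x ^+ n.+1)%Z -> (p%:Z %| x)%Z.
Proof. by move=> p_pr; rewrite !dvdzE /= abszX Euclid_dvdX // andbT. Qed.

(* An odd common prime of [a + e] and [a - e] divides [a], [e], hence [c], and [b^3 = e^2 - a^2]. *)
Lemma primitive_resolvents_coprime (a b c e : int) :
  gcdz (gcdz a b) c = 1 -> a ^+ 2 + b ^+ 3 = c ^+ 10 -> e ^+ 2 = c ^+ 10 ->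
  forall p : nat, prime p -> odd p -> (p%:Z %| a + e)%Z -> (p%:Z %| a - e)%Z -> False.
Proof.
move=> abc_coprime abc e_sq p p_pr p_odd p_m p_n.
have p_a : (p%:Z %| a)%Z.
  apply: odd_prime_dvdz_double => //.
  by rewrite (_ : 2 * a = a + e + (a - e)); [exact: rpredD | ring].
have p_e : (p%:Z %| e)%Z.
  apply: odd_prime_dvdz_double => //.
  by rewrite (_ : 2 * e = a + e - (a - e)); [exact: rpredB | ring].
have p_c : (p%:Z %| c)%Z.
  by apply: (@prime_dvdzX p c 9) => //; rewrite -e_sq dvdz_mulr.
have p_b : (p%:Z %| b)%Z.
  apply: (@prime_dvdzX p b 2) => //.
  rewrite (_ : b ^+ 3 = e ^+ 2 - a ^+ 2); first by rewrite rpredB // dvdz_mulr.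
  by rewrite e_sq -abc; ring.
have : (p%:Z %| gcdz (gcdz a b) c)%Z by rewrite !dvdz_gcd p_a p_b p_c.
by rewrite abc_coprime dvdzE /= dvdn1 => /eqP p1; rewrite p1 in p_pr.
Qed.

(* [k = 0] is excluded: a cube [a + e] would give a rational root of [f] by Cardano's formula. *)
Lemma cube_class2_resolvent (a b c e : int) :
  gcdz (gcdz a b) c = 1 -> a ^+ 2 + b ^+ 3 = c ^+ 10 -> e ^+ 2 = c ^+ 10 ->
  irreducible_poly (fcubic a b) -> a + e != 0 -> cube_class2 (a + e).
Proof.
move=> abc_coprime abc e_sq f_irr m_neq0.
have mn_cube : (a + e) * (a - e) = - b ^+ 3.
  by rewrite (_ : _ * _ = a ^+ 2 - e ^+ 2); [rewrite e_sq -abc; ring | ring].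
have [[|k] k_lt3 [T cubeT]] := odd_coprimez_mul_cube mn_cube m_neq0
  (primitive_resolvents_coprime abc_coprime abc e_sq).
  rewrite expr0 mulr1 in cubeT.
  have T_neq0 : T != 0 by apply: contraNneq m_neq0 => T0; rewrite cubeT T0 expr0n.
  have mn_sum : (a + e) + (a - e) = 2 * a by ring.
  have := fcubic_root_of_cube mn_cube mn_sum cubeT T_neq0.
  by rewrite (negPf (irreducible_fcubic_noroot _ f_irr)).
by exists k.+1 => //; exists T.
Qed.

Lemma prod_XsubC3 (R : comNzRingType) (r1 r2 r3 : R) :
  ('X - r1%:P) * ('X - r2%:P) * ('X - r3%:P) =
  'X^3 - (r1 + r2 + r3)%:P * 'X^2 + (r1 * r2 + r1 * r3 + r2 * r3)%:P * 'X
    - (r1 * r2 * r3)%:P.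
Proof. by ring. Qed.

Lemma cbrt1_sqrE (R : pzRingType) (w : R) : w ^+ 2 + w + 1 = 0 -> w ^+ 2 = - w - 1.
Proof. by move=> w_cbrt1; apply: (addIr (w + 1)); rewrite addrA w_cbrt1 -opprD addNr. Qed.

Lemma cube_XsubC (R : comNzRingType) (w z : R) :
  w ^+ 2 + w + 1 = 0 ->
  ('X - z%:P) * ('X - (z * w)%:P) * ('X - (z * w ^+ 2)%:P) = 'X^3 - (z ^+ 3)%:P.
Proof.
move/cbrt1_sqrE => w2E.
have w2P : w%:P ^+ 2 = - w%:P - 1 :> {poly R} by rewrite -rmorphXn w2E rmorphB rmorphN.
by ring: w2P.
Qed.

Definition resolvent (R : pzRingType) (w r1 r2 r3 : R) := r1 + w * r2 + w ^+ 2 * r3.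

Section LagrangeResolvents.
Variables (R : comNzRingType) (w r1 r2 r3 : R).
Hypotheses (w_cbrt1 : w ^+ 2 + w + 1 = 0) (trace0 : r1 + r2 + r3 = 0).
Let u := resolvent w r1 r2 r3.
Let v := resolvent w r1 r3 r2.
Let w2E := cbrt1_sqrE w_cbrt1.
Let r3E : r3 = - r1 - r2. Proof. by apply/eqP; rewrite -opprD -addr_eq0 addrC trace0. Qed.

Lemma resolvent_mul : u * v = -3 * (r1 * r2 + r1 * r3 + r2 * r3).
Proof. by rewrite /u /v /resolvent; ring: w2E r3E. Qed.

Lemma resolvent_cubeD : u ^+ 3 + v ^+ 3 = 27 * (r1 * r2 * r3).
Proof. by rewrite /u /v /resolvent; ring: w2E r3E. Qed.

Lemma resolvent_roots :
  [/\ 3 * r1 = u + v, 3 * r2 = w ^+ 2 * u + w * v & 3 * r3 = w * u + w ^+ 2 * v].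
Proof. by rewrite /u /v /resolvent; split; ring: w2E r3E. Qed.

End LagrangeResolvents.

Lemma cbrt1_of_sqrtN3 (F : fieldType) (d : F) :
  2 != 0 :> F -> d ^+ 2 = -3 -> ((d - 1) / 2) ^+ 2 + (d - 1) / 2 + 1 = 0.
Proof. by move=> two_neq0 d_sq; apply: (mulIf (mulf_neq0 two_neq0 two_neq0)); field: d_sq. Qed.

Section CubicSplittingField.
Variable K : fieldExtType rat.

Lemma fext_natr_eq0 (n : nat) : (n%:R == 0 :> K) = (n == 0)%N.
Proof. by rewrite -(rmorph_nat (in_alg K)) fmorph_eq0 pnatr_eq0. Qed.

Lemma fext_intr_eq0 (z : int) : (z%:~R == 0 :> K) = (z == 0).
Proof. by rewrite -(rmorph_int (in_alg K)) fmorph_eq0 intr_eq0. Qed.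

Lemma map_fcubic (a b : int) :
  map_poly (in_alg K) (fcubic a b) = 'X^3 + (3 * b%:~R)%:P * 'X - (2 * a%:~R)%:P.
Proof.
have algE (z : int) : (z%:~R : rat)%:A = z%:~R :> K by rewrite -in_algE rmorph_int.
by rewrite /fcubic rmorphB rmorphD rmorphXn rmorphM /= map_polyX !map_polyC /= !algE !intrM.
Qed.

Lemma splitting_fcubic_roots (a b : int) :
  is_splitting_field_Q K (fcubic a b) ->
  exists r1 r2 r3 : K,
    [/\ r1 + r2 + r3 = 0, r1 * r2 + r1 * r3 + r2 * r3 = 3 * b%:~R,
        r1 * r2 * r3 = 2 * a%:~R & <<1 & [:: r1; r2; r3]>>%VS = fullv].
Proof.
case=> rs; rewrite map_fcubic => f_split rs_gen.
have /eqp_size := f_split; rewrite size_cubic size_prod_XsubC.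
case: rs f_split rs_gen => [|r1 [|r2 [|r3 [|]]]] //= f_split rs_gen _.
move: f_split; rewrite eqp_monic ?monic_cubic ?monic_prod_XsubC // => /eqP.
rewrite !big_cons big_nil mulr1 mulrA prod_XsubC3 => f_eq.
have coef_eq i := congr1 (fun p : {poly K} => p`_i) f_eq.
move: (coef_eq 0%N) (coef_eq 1%N) (coef_eq 2%N); rewrite /= !coefE /=.
rewrite !(mulr0, mulr1, add0r, addr0, subr0, sub0r, oppr0) => coef0 coef1 coef2.
exists r1, r2, r3; split => //; last by apply: oppr_inj.
by apply/eqP; rewrite -oppr_eq0 -coef2.
Qed.

Section Cardano.
Variables (a b c : int) (r1 r2 r3 : K).
Hypotheses (trace0 : r1 + r2 + r3 = 0) (e2E : r1 * r2 + r1 * r3 + r2 * r3 = 3 * b%:~R)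
  (e3E : r1 * r2 * r3 = 2 * a%:~R) (abc : a ^+ 2 + b ^+ 3 = c ^+ 10) (c_neq0 : c != 0).

Let abcK : a%:~R ^+ 2 + b%:~R ^+ 3 = c%:~R ^+ 10 :> K.
Proof. by rewrite -!rmorphXn -intrD abc. Qed.

(* The discriminant [-4 (3b)^3 - 27 (2a)^2 = -108 c^10] is [-3] times the square [(6 c^5)^2]. *)
Lemma fcubic_roots_cbrt1 : exists w : K, w ^+ 2 + w + 1 = 0.
Proof.
have two_neq0 : 2 != 0 :> K by rewrite fext_natr_eq0.
have c5_neq0 : 6 * c%:~R ^+ 5 != 0 :> K.
  by rewrite mulf_neq0 ?expf_neq0 ?fext_natr_eq0 ?fext_intr_eq0.
have r3E : r3 = - r1 - r2 by apply/eqP; rewrite -opprD -addr_eq0 addrC trace0.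
pose del := (r1 - r2) * (r2 - r3) * (r3 - r1).
have del_sq : del ^+ 2 = -3 * (6 * c%:~R ^+ 5) ^+ 2.
  rewrite (_ : -3 * _ = -4 * (3 * b%:~R) ^+ 3 - 27 * (2 * a%:~R) ^+ 2); last first.
    by rewrite exprMn -exprM -abcK; ring.
  by rewrite -e2E -e3E /del; ring: r3E.
exists ((del / (6 * c%:~R ^+ 5) - 1) / 2); apply: cbrt1_of_sqrtN3 => //.
by rewrite expr_div_n del_sq mulfK // expf_neq0.
Qed.

Variable w : K.
Hypothesis w_cbrt1 : w ^+ 2 + w + 1 = 0.
Let u := resolvent w r1 r2 r3.
Let v := resolvent w r1 r3 r2.

Let uvE : u * v = -9 * b%:~R.
Proof. by rewrite resolvent_mul // e2E; ring. Qed.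

Let u3v3E : u ^+ 3 + v ^+ 3 = 54 * a%:~R.
Proof. by rewrite resolvent_cubeD // e3E; ring. Qed.

(* [u^3] and [v^3] are the two roots [27 (a +- c^5)] of [t^2 - 54 a t - 729 b^3]. *)
Lemma resolvent_cube (X : K) :
  X = u \/ X = v -> exists2 e : int, e ^+ 2 = c ^+ 10 & X ^+ 3 = 27 * (a + e)%:~R.
Proof.
move=> X_uv; have c10E := esym abcK.
have : (X ^+ 3 - u ^+ 3) * (X ^+ 3 - v ^+ 3) = 0.
  by case: X_uv => ->; rewrite subrr ?mul0r ?mulr0.
have -> : (X ^+ 3 - u ^+ 3) * (X ^+ 3 - v ^+ 3)
    = X ^+ 6 - (u ^+ 3 + v ^+ 3) * X ^+ 3 + (u * v) ^+ 3 by ring.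
rewrite u3v3E uvE (_ : X ^+ 6 - _ + _ =
    (X ^+ 3 - 27 * (a%:~R + c%:~R ^+ 5)) * (X ^+ 3 - 27 * (a%:~R - c%:~R ^+ 5))); last first.
  by ring: c10E.
move/eqP; rewrite mulf_eq0 !subr_eq0 => /orP[] /eqP X3E.
  by exists (c ^+ 5); rewrite ?X3E -?exprM ?intrD ?rmorphXn.
by exists (- c ^+ 5); rewrite ?sqrrN -?exprM // X3E intrD intrN rmorphXn.
Qed.

Lemma resolvents_neq0 : u != 0 \/ v != 0.
Proof.
have [u0 | u_neq0] := eqVneq u 0; [right | by left].
apply: contraNneq c_neq0 => v0.
have [r1E r2E r3E] := resolvent_roots w_cbrt1 trace0.
have three_neq0 : 3 != 0 :> K by rewrite fext_natr_eq0.
have r_0 (r : K) : 3 * r = 0 -> r = 0 by move/eqP; rewrite mulf_eq0 (negPf three_neq0) => /eqP.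
have [r1_0 r2_0 r3_0] : [/\ r1 = 0, r2 = 0 & r3 = 0].
  by split; apply: r_0; rewrite ?r1E ?r2E ?r3E -/u -/v u0 v0; ring.
have b0 : b = 0.
  move: e2E; rewrite r1_0 r2_0 r3_0 !mul0r !addr0 => /eqP.
  by rewrite eq_sym mulf_eq0 (negPf three_neq0) fext_intr_eq0 => /eqP.
have a0 : a = 0.
  move: e3E; rewrite r1_0 !mul0r => /eqP.
  by rewrite eq_sym mulf_eq0 fext_natr_eq0 fext_intr_eq0 => /eqP.
have : c ^+ 10 = 0 by rewrite -abc a0 b0; ring.
by move/eqP; rewrite expf_eq0.
Qed.

Lemma roots_in_resolvent_field (E : {subfield K}) :
  w \in E -> u \in E -> v \in E -> {subset [:: r1; r2; r3] <= E}.
Proof.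
move=> wE uE vE r; have [r1E r2E r3E] := resolvent_roots w_cbrt1 trace0.
have three_neq0 : 3 != 0 :> K by rewrite fext_natr_eq0.
have third (s : K) : 3 * s \in E -> s \in E.
  by move=> sE; rewrite -(mulKf three_neq0 s) rpredM ?rpredV ?rpred_nat.
by rewrite !inE => /or3P[] /eqP ->; apply: third; rewrite ?r1E ?r2E ?r3E rpredD ?rpredM ?rpredX.
Qed.

Lemma cardano_resolvent :
  exists rho : K, exists2 e : int, e ^+ 2 = c ^+ 10 &
    [/\ rho ^+ 3 = 27 * (a + e)%:~R, rho != 0 &
        forall E : {subfield K}, w \in E -> rho \in E -> {subset [:: r1; r2; r3] <= E}].
Proof.
have [u_neq0 | v_neq0] := resolvents_neq0.
  have [e e_sq u3E] := resolvent_cube (or_introl erefl).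
  exists u, e => //; split => // E wE uE; apply: roots_in_resolvent_field => //.
  by rewrite -(mulKf u_neq0 v) uvE !rpredM ?rpredV ?rpredN ?rpred_nat ?rpred_int.
have [e e_sq v3E] := resolvent_cube (or_intror erefl).
exists v, e => //; split => // E wE vE; apply: roots_in_resolvent_field => //.
by rewrite -(mulfK v_neq0 u) uvE !rpredM ?rpredV ?rpredN ?rpred_nat ?rpred_int.
Qed.

End Cardano.

Lemma cbrt2_of_cube_class2 (rho : K) (m : int) :
  rho ^+ 3 = 27 * m%:~R -> rho != 0 -> cube_class2 m ->
  exists2 s : K, s ^+ 3 = 2 & forall E : {subfield K}, s \in E -> rho \in E.
Proof.
move=> rho3E rho_neq0 [k /andP[k_gt0 k_lt3] [T mT]].
have m_neq0 : m%:~R != 0 :> K.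
  by apply: contra_neq (expf_neq0 3 rho_neq0); rewrite rho3E => ->; rewrite mulr0.
have mK : m%:~R * 4 ^+ k = T%:~R ^+ 3 :> K.
  by have := congr1 (fun z : int => z%:~R : K) mT; rewrite /= intrM !rmorphXn.
have T_neq0 : T%:~R != 0 :> K.
  have : T%:~R ^+ 3 != 0 :> K by rewrite -mK mulf_neq0 // expf_neq0 // fext_natr_eq0.
  by rewrite expf_eq0.
case: k k_gt0 k_lt3 mT mK => [|[|[|]]] // _ _ _ mK.
  exists (2 * rho / (3 * T%:~R)).
    by rewrite expr_div_n !exprMn rho3E -mK; field; rewrite ?m_neq0 ?T_neq0 ?fext_natr_eq0.
  move=> E sE; have -> : rho = 2 * rho / (3 * T%:~R) * (3 * T%:~R / 2).
    by field; rewrite ?m_neq0 ?T_neq0 ?fext_natr_eq0.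
  by rewrite rpredM // rpred_div ?rpredM ?rpred_nat ?rpred_int.
pose y := 4 * rho / (3 * T%:~R).
have y3E : y ^+ 3 = 4.
  by rewrite expr_div_n !exprMn rho3E -mK; field; rewrite ?m_neq0 ?T_neq0 ?fext_natr_eq0.
have rhoE : rho = y * (3 * T%:~R / 4) by rewrite /y; field; rewrite ?T_neq0 ?fext_natr_eq0.
clearbody y.
exists (y ^+ 2 / 2) => [|E sE].
  by rewrite expr_div_n -exprM; field: y3E; rewrite fext_natr_eq0.
have yE : y = (y ^+ 2 / 2) ^+ 2 by rewrite expr_div_n -exprM; field: y3E; rewrite fext_natr_eq0.
by rewrite rhoE yE rpredM ?rpredX // rpred_div ?rpredM ?rpred_nat ?rpred_int.
Qed.

(* With [d = 1 + 2 w], so that [d^2 = -3], the element [x = s d] has [x^3 = -6 d];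
   hence [d] and then [s = x / d] lie in any field containing [x]. *)
Lemma sextic_generator (s w : K) :
  s ^+ 3 = 2 -> w ^+ 2 + w + 1 = 0 ->
  (s * (1 + 2 * w)) ^+ 6 = -108 /\
  forall E : {subfield K}, s * (1 + 2 * w) \in E -> s \in E /\ w \in E.
Proof.
move=> s3E w_cbrt1; have w2E := cbrt1_sqrE w_cbrt1.
set d := 1 + 2 * w; set x := s * d.
have d2E : d ^+ 2 = -3 by rewrite /d; ring: w2E.
have x3E : x ^+ 3 = -6 * d by rewrite /x exprMn s3E; ring: d2E.
have d_neq0 : d != 0.
  apply/eqP => d0; move: d2E; rewrite d0 expr0n /= => /eqP.
  by rewrite eq_sym oppr_eq0 fext_natr_eq0.
split=> [|E xE]; first by rewrite (_ : 6 = 3 * 2)%N // exprM x3E; ring: d2E.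
have dE : d \in E.
  rewrite (_ : d = x ^+ 3 / -6); last by rewrite x3E; field; rewrite oppr_eq0 fext_natr_eq0.
  by rewrite rpred_div ?rpredX ?rpredN ?rpred_nat.
split; first by rewrite (_ : s = x / d) ?rpred_div // /x mulfK.
rewrite (_ : w = (d - 1) / 2); last by rewrite /d; field; rewrite fext_natr_eq0.
by rewrite rpred_div ?rpredB ?rpred1 ?rpred_nat.
Qed.

Lemma splitting_fcubic_sextic (a b c : int) :
  is_splitting_field_Q K (fcubic a b) -> a ^+ 2 + b ^+ 3 = c ^+ 10 -> c != 0 ->
  (forall e : int, e ^+ 2 = c ^+ 10 -> a + e != 0 -> cube_class2 (a + e)) ->
  exists x w : K, [/\ <<1; x>>%VS = fullv, x ^+ 6 = -108 & w ^+ 2 + w + 1 = 0].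
Proof.
move=> f_split abc c_neq0 resolvent_class.
have [r1 [r2 [r3 [trace0 e2E e3E rs_gen]]]] := splitting_fcubic_roots f_split.
have [w w_cbrt1] := fcubic_roots_cbrt1 trace0 e2E e3E abc c_neq0.
have [rho [e e_sq [rho3E rho_neq0 rs_in]]] :=
  cardano_resolvent trace0 e2E e3E abc c_neq0 w_cbrt1.
have m_neq0 : a + e != 0.
  by apply: contra_neq (expf_neq0 3 rho_neq0); rewrite rho3E => ->; rewrite mulr0.
have [s s3E rho_in] := cbrt2_of_cube_class2 rho3E rho_neq0 (resolvent_class e e_sq m_neq0).
have [x6E sw_in] := sextic_generator s3E w_cbrt1.
exists (s * (1 + 2 * w)), w; split => //.
have [sE wE] := sw_in <<1; s * (1 + 2 * w)>>%AS (memv_adjoin _ _).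
apply/eqP; rewrite eqEsubv subvf -rs_gen /=; apply/Fadjoin_seqP.
by split; [exact: sub1v | exact: rs_in _ wE (rho_in _ sE)].
Qed.

Lemma root_sextic (x : K) : x ^+ 6 = -108 -> root (map_poly (in_alg K) ('X^6 + 108%:P)) x.
Proof.
move=> x6E; rewrite /root rmorphD rmorphXn /= map_polyX map_polyC /= !hornerE x6E.
by rewrite -in_algE rmorph_nat addNr.
Qed.

Lemma sextic_splits (x w : K) :
  x ^+ 6 = -108 -> w ^+ 2 + w + 1 = 0 ->
  map_poly (in_alg K) ('X^6 + 108%:P) =
  \prod_(z <- [:: x; x * w; x * w ^+ 2; - x; - x * w; - x * w ^+ 2]) ('X - z%:P).
Proof.
move=> x6E w_cbrt1.
have -> : map_poly (in_alg K) ('X^6 + 108%:P) = ('X^3 - (x ^+ 3)%:P) * ('X^3 - ((- x) ^+ 3)%:P).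
  rewrite rmorphD rmorphXn /= map_polyX map_polyC /= -in_algE rmorph_nat.
  have -> : (108 : K) = - x ^+ 6 by rewrite x6E opprK.
  by rewrite rmorphN !rmorphXn /=; ring.
by rewrite -!(cube_XsubC _ w_cbrt1) !big_cons big_nil; ring.
Qed.

End CubicSplittingField.

Section ExtensionMorphisms.
Variables L M : fieldExtType rat.

(* [q(x) |-> q(y)] for a root [y] in [M] of the minimal polynomial of [x], which divides [P]. *)
Lemma rmorph_of_simple_ext (x : L) (P : {poly rat}) (rs : seq M) :
  <<1; x>>%VS = fullv -> root (map_poly (in_alg L) P) x ->
  map_poly (in_alg M) P = \prod_(z <- rs) ('X - z%:P) -> inhabited {rmorphism L -> M}.
Proof.
move=> x_gen Px P_split.
have [mp mpE] : exists mp, minPoly 1 x = map_poly (in_alg L) mp.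
  by apply/polyOver1P; apply: minPolyOver.
have mp_dvd q : root (map_poly (in_alg L) q) x -> mp %| q.
  by move=> qx; rewrite -(dvdp_map (in_alg L)) -mpE minPoly_dvdp ?alg_polyOver.
have [y mp_y] : exists y, root (map_poly (in_alg M) mp) y.
  have : map_poly (in_alg M) mp %| \prod_(z <- rs) ('X - z%:P).
    by rewrite -P_split dvdp_map mp_dvd.
  case/dvdp_prod_XsubC => msk mskE.
  exists (mask msk rs)`_0; rewrite (eqp_root mskE) root_prod_XsubC mem_nth //.
  rewrite -ltnS -(size_prod_XsubC _ id) -(eqp_size mskE) size_map_poly.
  by have := size_minPoly 1 x; rewrite mpE size_map_poly => ->.
have evalx u : exists q, u == (map_poly (in_alg L) q).[x].
  have /Fadjoin1_polyP[q ->] : u \in <<1; x>>%VS by rewrite x_gen memvf.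
  by exists q.
have eval_wd q1 q2 : (map_poly (in_alg L) q1).[x] = (map_poly (in_alg L) q2).[x] ->
    (map_poly (in_alg M) q1).[y] = (map_poly (in_alg M) q2).[y].
  move/eqP; rewrite -subr_eq0 -hornerN -hornerD -rmorphB => /eqP/rootP/mp_dvd.
  rewrite -(dvdp_map (in_alg M)) => /dvdpP[r rE]; apply/eqP; rewrite -subr_eq0.
  rewrite -hornerN -hornerD -rmorphB; change (root (map_poly (in_alg M) (q1 - q2)) y).
  by rewrite rE rootM mp_y orbT.
pose phi u := (map_poly (in_alg M) (xchoose (evalx u))).[y].
have phiE q : phi (map_poly (in_alg L) q).[x] = (map_poly (in_alg M) q).[y].
  by apply: eval_wd; rewrite -(eqP (xchooseP (evalx _))).
have phiB : zmod_morphism phi.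
  move=> u v; have [qu /eqP ->] := evalx u; have [qv /eqP ->] := evalx v.
  by rewrite -hornerN -hornerD -rmorphB !phiE rmorphB hornerD hornerN.
have phiM : monoid_morphism phi.
  split; first by have := phiE 1; rewrite !rmorph1 !hornerC.
  move=> u v; have [qu /eqP ->] := evalx u; have [qv /eqP ->] := evalx v.
  by rewrite -hornerM -rmorphM !phiE rmorphM hornerM.
pose phiZ := GRing.isZmodMorphism.Build _ _ _ phiB.
pose phiMM := GRing.isMonoidMorphism.Build _ _ _ phiM.
exact: inhabits (HB.pack phi phiZ phiMM : {rmorphism L -> M}).
Qed.

Lemma rmorph_lfun (g : {rmorphism L -> M}) :
  exists2 G : 'Hom(L, M), lker G == 0%VS & G =1 g.
Proof.
have gB : zmod_morphism g by move=> u v; rewrite rmorphB.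
pose gL : {linear L -> M} := HB.pack (g : L -> M)
  (GRing.isZmodMorphism.Build _ _ _ gB) (GRing.isScalable.Build _ _ _ _ _ (rat_linear gB)).
exists (linfun gL) => [|u]; last by rewrite lfunE.
by apply/lker0P => u v; rewrite !lfunE /=; apply: fmorph_inj.
Qed.

Lemma rmorph_dim_le (g : {rmorphism L -> M}) : (\dim {:L} <= \dim {:M})%N.
Proof.
have [G /eqP G_inj _] := rmorph_lfun g.
by rewrite -(limg_ker_dim G fullv) G_inj capv0 dimv0 add0n dimvS ?subvf.
Qed.

Lemma rmorph_bij (g : {rmorphism L -> M}) : (\dim {:M} <= \dim {:L})%N -> bijective g.
Proof.
move=> dimML; have [G G_inj GE] := rmorph_lfun g.
have G_onto : limg G = fullv.
  apply/eqP; rewrite eqEdim subvf /= (leq_trans dimML) //.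
  by rewrite -(limg_ker_dim G fullv) (eqP G_inj) capv0 dimv0.
exists (G^-1)%VF => u; first by rewrite -GE lker0_lfunK.
by rewrite -GE limg_lfunVK // G_onto memvf.
Qed.

End ExtensionMorphisms.

Lemma field_iso_sextic (L M : fieldExtType rat) (x w : L) (y v : M) :
  <<1; x>>%VS = fullv -> x ^+ 6 = -108 -> w ^+ 2 + w + 1 = 0 ->
  <<1; y>>%VS = fullv -> y ^+ 6 = -108 -> v ^+ 2 + v + 1 = 0 -> field_iso L M.
Proof.
move=> x_gen x6E w_cbrt1 y_gen y6E v_cbrt1.
have [g] := rmorph_of_simple_ext x_gen (root_sextic x6E) (sextic_splits y6E v_cbrt1).
have [h] := rmorph_of_simple_ext y_gen (root_sextic y6E) (sextic_splits x6E w_cbrt1).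
by exists g; apply: rmorph_bij (rmorph_dim_le h).
Qed.

Lemma fcubic_model : fcubic 3 (-2) = 'X^3 - 6%:P * 'X - 6%:P.
Proof. by rewrite /fcubic (_ : (3 * -2)%:~R = -6) // polyCN mulNr. Qed.

Lemma cube_class2_model (e : int) : e ^+ 2 = 1 ^+ 10 -> 3 + e != 0 -> cube_class2 (3 + e).
Proof.
move=> /eqP; rewrite expr1n sqrf_eq1 => /orP[] /eqP -> _.
  by exists 2%N => //; exists 4.
by exists 1%N => //; exists 2.
Qed.

Theorem lemma3p4 (a b c : int) :
  gcdz (gcdz a b) c = 1 ->
  a ^+ 2 + b ^+ 3 = c ^+ 10 ->
  irreducible_poly (fcubic a b) ->
  forall (L1 L2 : fieldExtType rat),
    is_splitting_field_Q L1 (fcubic a b) ->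
    is_splitting_field_Q L2 ('X^3 - 6%:P * 'X - 6%:P) ->
    field_iso L1 L2.
Proof.
move=> abc_coprime abc f_irr L1 L2 L1_split L2_split.
have c_neq0 := irreducible_fcubic_c_neq0 abc f_irr.
have [x [w [x_gen x6E w_cbrt1]]] := splitting_fcubic_sextic L1_split abc c_neq0
  (fun e e_sq => cube_class2_resolvent abc_coprime abc e_sq f_irr).
rewrite -fcubic_model in L2_split.
have [y [v [y_gen y6E v_cbrt1]]] :=
  splitting_fcubic_sextic L2_split (erefl : 3 ^+ 2 + (-2) ^+ 3 = 1 ^+ 10 :> int) isT
    cube_class2_model.
exact: field_iso_sextic x_gen x6E w_cbrt1 y_gen y6E v_cbrt1.
Qed.
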